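(* Let $M$ be a left $\bar k[t,\sigma]$-module finitely generated both over $\bar k[\sigma]$ and over $\bar k[t]$. Let $M_\sigma$ (resp. $M_t$) be the sum of all $\bar k[\sigma]$-submodules (resp. $\bar k[t]$-submodules) $N\subset M$ with $\dim_{\bar k}N<\infty$. Then $M_\sigma=M_t$, $\dim_{\bar k}M_\sigma<\infty$, and $M/M_\sigma$ is free of finite rank both over $\bar k[\sigma]$ and over $\bar k[t]$.
   Context: $\bar k$ is the algebraic closure of $k=\mathbb F_q(T)$ and $t$ a variable. $\bar k[\sigma]$ is the noncommutative polynomial ring with $\sigma x=x^{q^{-1}}\sigma$ ($x\in\bar k$); $\bar k[t,\sigma]$ is obtained by adjoining to $\bar k[\sigma]$ a variable $t$ commuting with $\sigma$ and with $\bar k$. *)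

From HB Require Import structures.
From mathcomp Require Import all_boot all_order all_algebra all_field.
From mathcomp Require Import fraction.
Set Implicit Arguments. Unset Strict Implicit. Unset Printing Implicit Defensive.
Import Order.TTheory GRing.Theory.
Local Open Scope ring_scope.

(* A left kbar[t,sigma]-module is encoded as a kbar-vector space M together
   with an additive, sigma-semilinear map sM (action of sigma) and a
   kbar-linear map tM (action of t) commuting with sM. *)

Section Defs.
Variables (K : fieldType) (M : lmodType K).

Definition kspan (s : seq M) (m : M) : Prop :=
  exists c : nat -> K, m = \sum_(i < size s) c i *: s`_i.

Definition fd_stable (f : M -> M) (N : M -> Prop) : Prop :=
  [/\ N 0, (forall x y, N x -> N y -> N (x + y)),
      (forall (a : K) x, N x -> N (a *: x)),
      (forall x, N x -> N (f x)) &
      exists s : seq M, forall m, N m <-> kspan s m].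

Definition tors_part (f : M -> M) (m : M) : Prop :=
  exists (n : nat) (Ns : nat -> M -> Prop) (xs : nat -> M),
    (forall i, (i < n)%N -> fd_stable f (Ns i) /\ Ns i (xs i)) /\
    m = \sum_(i < n) xs i.

Definition skew_act (f : M -> M) (c : nat -> K) (d : nat) (m : M) : M :=
  \sum_(j < d) c j *: iter j f m.

Definition fin_gen (f : M -> M) : Prop :=
  exists gens : seq M, forall m, exists (d : nat) (c : nat -> nat -> K),
    m = \sum_(i < size gens) skew_act f (c i) d gens`_i.

(* M / P is a free kbar[f]-module of finite rank (P a submodule):
   there are e_1..e_r in M whose images form a kbar[f]-basis of M/P. *)
Definition free_fin_rank_quot (f : M -> M) (P : M -> Prop) : Prop :=
  exists e : seq M,
    (forall m, exists (d : nat) (c : nat -> nat -> K),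
        P (m - \sum_(i < size e) skew_act f (c i) d e`_i)) /\
    (forall (d : nat) (c : nat -> nat -> K),
        P (\sum_(i < size e) skew_act f (c i) d e`_i) ->
        forall i j, (i < size e)%N -> (j < d)%N -> c i j = 0).

End Defs.

From HB Require Import structures.
From mathcomp Require Import all_boot all_order all_algebra all_field.
From mathcomp Require Import fraction zify.
From Stdlib Require Import Classical IndefiniteDescription.
Set Implicit Arguments. Unset Strict Implicit. Unset Printing Implicit Defensive.
Import Order.TTheory GRing.Theory.
Local Open Scope ring_scope.

(* If f is additive and semilinear for a field automorphism th, M is a module over
   the skew polynomial ring K[X; th], where left Euclidean division holds.  Start
   from a finite generating family g and the f-stable subspace S = 0.  While g
   satisfies a nontrivial relation modulo S, either only one generator g_k occurs
   in it, and then g_k is torsion modulo S, so that g_k and finitely many of its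
   iterates can be absorbed into S; or two coefficients are nonzero, and a
   transvection g_k += q g_i, with q a left quotient of one coefficient by the
   other, lowers the total degree of the relation.  The process stops with
   generators free modulo a finite-dimensional f-stable S; every torsion element
   then lies in S, so S spans M_f and M/M_f is free.  This applies to f = t
   (th = id) and to f = sigma (th the inverse of x |-> x^q).  Finally, t commutes
   with sigma, so it maps the finite-dimensional sigma-stable space M_sigma into
   itself, which puts M_sigma inside M_t; symmetrically M_t lies in M_sigma. *)

Section Kspan.
Variables (K : fieldType) (M : lmodType K).
Implicit Types (s t : seq M) (m x y : M).

Lemma kspan0 s : kspan s 0.
Proof. by exists (fun _ => 0); rewrite big1 // => i _; rewrite scale0r. Qed.

Lemma kspanD s x y : kspan s x -> kspan s y -> kspan s (x + y).
Proof.
move=> [c1 ->] [c2 ->]; exists (fun i => c1 i + c2 i).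
by rewrite -big_split; apply: eq_bigr => i _; rewrite scalerDl.
Qed.

Lemma kspanZ s a x : kspan s x -> kspan s (a *: x).
Proof.
move=> [c ->]; exists (fun i => a * c i).
by rewrite scaler_sumr; apply: eq_bigr => i _; rewrite scalerA.
Qed.

Lemma kspanB s x y : kspan s x -> kspan s y -> kspan s (x - y).
Proof. by move=> Hx Hy; rewrite -scaleN1r; apply/kspanD/kspanZ. Qed.

Lemma kspan_sum s n (F : nat -> M) :
  (forall i, (i < n)%N -> kspan s (F i)) -> kspan s (\sum_(i < n) F i).
Proof.
move=> sF; apply: (big_ind (kspan s)); [exact: kspan0 | exact: kspanD |].
by move=> i _; apply: sF.
Qed.

Lemma kspan_nth s i : (i < size s)%N -> kspan s s`_i.
Proof.
move=> lt_i; exists (fun j => (j == i)%:R).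
rewrite (bigD1 (Ordinal lt_i)) //= eqxx scale1r big1 ?addr0 // => j neq_ji.
by rewrite -val_eqE /= in neq_ji; rewrite (negbTE neq_ji) scale0r.
Qed.

Lemma kspan_trans s t m :
  (forall i, (i < size s)%N -> kspan t s`_i) -> kspan s m -> kspan t m.
Proof.
move=> st [c ->]; apply: (kspan_sum (F := fun i => c i *: s`_i)) => i lt_i.
exact/kspanZ/st.
Qed.

Lemma kspan_catl s t m : kspan s m -> kspan (s ++ t) m.
Proof.
apply: kspan_trans => i lt_i; have <- : (s ++ t)`_i = s`_i by rewrite nth_cat lt_i.
by apply: kspan_nth; rewrite size_cat ltn_addr.
Qed.

Lemma kspan_nil m : kspan [::] m -> m = 0.
Proof. by move=> [c ->]; rewrite big_ord0. Qed.

Lemma kspan_dependent t (x : nat -> M) : (forall j, kspan t (x j)) ->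
  exists A : {poly K}, [/\ A != 0, (size A <= (size t).+1)%N &
    \sum_(j < (size t).+1) A`_j *: x j = 0].
Proof.
move=> xt; have [c Ec] := functional_choice _ xt.
set n := size t in c Ec *.
pose C : 'M[K]_(n.+1, n) := \matrix_(j, i) c j i.
have /rowV0Pn [v /sub_kermxP vC nz_v] : kermx C != 0.
  apply/negP; rewrite kermx_eq0 => /eqP rkC.
  by have := rank_leq_col C; rewrite rkC ltnn.
exists (rVpoly v); split.
  by apply: contra nz_v => /eqP v0; rewrite -(rVpolyK v) v0 linear0.
  exact: size_poly.
transitivity (\sum_(k < n.+1) v 0 k *: x k).
  by apply: eq_bigr => k _; rewrite coef_rVpoly_ord.
under eq_bigr => k _ do rewrite Ec scaler_sumr.
rewrite exchange_big big1 //= => i _.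
transitivity ((v *m C) 0 i *: t`_i); last by rewrite vC mxE scale0r.
by rewrite mxE scaler_suml; apply: eq_bigr => k _; rewrite mxE scalerA.
Qed.

End Kspan.

Lemma big_ord_split2 (V : nmodType) n (F : nat -> V) i k :
  (i < n)%N -> (k < n)%N -> i != k ->
  \sum_(j < n) F j = F i + F k + \sum_(j < n | (j != i :> nat) && (j != k :> nat)) F j.
Proof.
move=> lt_i lt_k neq_ik; rewrite (bigD1 (Ordinal lt_i)) //= (bigD1 (Ordinal lt_k)) /=.
  by rewrite addrA; congr (_ + _); apply: eq_bigl.
by rewrite -val_eqE /= eq_sym.
Qed.

Lemma add_morph_nmod_morphism (U V : zmodType) (g : U -> V) :
  {morph g : x y / x + y} -> nmod_morphism g.
Proof. by move=> gD; split=> //; apply: (addrI (g 0)); rewrite -gD !addr0. Qed.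

Lemma kspan_fd_stable (K : fieldType) (M : lmodType K) (f : M -> M) (s : seq M) :
  (forall m, kspan s m -> kspan s (f m)) -> fd_stable f (kspan s).
Proof.
by move=> sf; split; [exact: kspan0 | exact: kspanD | exact: kspanZ | exact: sf |
  exists s].
Qed.

Lemma fd_stable_tors_part (K : fieldType) (M : lmodType K) (f : M -> M)
    (N : M -> Prop) m :
  fd_stable f N -> N m -> tors_part f m.
Proof.
by move=> fdN Nm; exists 1%N, (fun _ => N), (fun _ => m); rewrite big_ord1.
Qed.

Section SkewPolynomialAction.
Variables (K : fieldType) (M : lmodType K) (th : {rmorphism K -> K}).
Variable f : {additive M -> M}.
Hypothesis f_semi : forall a m, f (a *: m) = th a *: f m.
Hypothesis th_surj : forall b, exists a, th a = b.
Implicit Types (p q c d A : {poly K}) (s g : seq M) (m x y : M).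

Lemma iterf0 j : iter j f 0 = 0.
Proof. by elim: j => //= j ->; rewrite raddf0. Qed.

Lemma iterfD j x y : iter j f (x + y) = iter j f x + iter j f y.
Proof. by elim: j => //= j ->; rewrite raddfD. Qed.

Lemma iterfZ j a m : iter j f (a *: m) = iter j th a *: iter j f m.
Proof. by elim: j => //= j ->; rewrite f_semi. Qed.

Lemma iterth_eq0 j a : (iter j th a == 0) = (a == 0).
Proof. by elim: j => //= j <-; rewrite fmorph_eq0. Qed.

Lemma iterth0 j : iter j th 0 = 0.
Proof. by apply/eqP; rewrite iterth_eq0. Qed.

Lemma iterth_surj j b : exists a, iter j th a = b.
Proof.
elim: j b => [|j IHj] b; first by exists b.
by have [c <-] := th_surj b; have [a <-] := IHj c; exists a.
Qed.

Definition f_stable s := forall m, kspan s m -> kspan s (f m).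

Lemma f_stable_nth s : (forall i, (i < size s)%N -> kspan s (f s`_i)) -> f_stable s.
Proof.
move=> sf m [c ->]; rewrite raddf_sum.
apply: (kspan_sum (F := fun i => f (c i *: s`_i))) => i lt_i.
by rewrite f_semi; apply/kspanZ/sf.
Qed.

Lemma f_stable_iter s j m : f_stable s -> kspan s m -> kspan s (iter j f m).
Proof. by move=> sf; elim: j => //= j IHj /IHj /sf. Qed.

(* [p : {poly K}] acts as an element of K[X; th], where X * a = th a * X, with X
   acting by f; [lmulXn j c] and [skew_mul A c] below are the products X^j * c and
   A * c in that ring. *)
Definition act p m := \sum_(j < size p) p`_j *: iter j f m.

Fact act_is_nmod_morphism p : nmod_morphism (act p).
Proof.
split=> [|x y]; first by rewrite /act big1 // => j _; rewrite iterf0 scaler0.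
by rewrite /act -big_split; apply: eq_bigr => j _; rewrite iterfD scalerDr.
Qed.

HB.instance Definition _ p :=
  GRing.isNmodMorphism.Build M M (act p) (act_is_nmod_morphism p).

Lemma act_widen n p m : (size p <= n)%N ->
  act p m = \sum_(j < n) p`_j *: iter j f m.
Proof.
move=> le_p_n; rewrite /act (big_ord_widen n (fun j => p`_j *: iter j f m) le_p_n).
rewrite big_mkcond; apply: eq_bigr => j _.
by case: ltnP => // le_p_j; rewrite nth_default // scale0r.
Qed.

Lemma act0 m : act 0 m = 0.
Proof. by rewrite /act size_poly0 big_ord0. Qed.

Lemma act1 m : act 1 m = m.
Proof. by rewrite /act size_poly1 big_ord1 coefC scale1r. Qed.

Lemma actD p q m : act (p + q) m = act p m + act q m.
Proof.
rewrite !(act_widen (n := maxn (size p) (size q))) ?leq_maxl ?leq_maxr ?size_polyD //.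
by rewrite -big_split; apply: eq_bigr => j _; rewrite coefD scalerDl.
Qed.

Lemma actZ a p m : act (a *: p) m = a *: act p m.
Proof.
rewrite !(act_widen (n := size p)) ?size_scale_leq // scaler_sumr.
by apply: eq_bigr => j _; rewrite coefZ scalerA.
Qed.

Lemma act_sum n (P : 'I_n -> {poly K}) m :
  act (\sum_(i < n) P i) m = \sum_(i < n) act (P i) m.
Proof. exact: (big_morph (act^~ m) (fun p q => actD p q m) (act0 m)). Qed.

Lemma act_poly (c : nat -> K) n m : act (\poly_(j < n) c j) m = skew_act f c n m.
Proof.
rewrite (act_widen (n := n)) ?size_poly //; apply: eq_bigr => j _.
by rewrite coef_poly ltn_ord.
Qed.

Lemma f_stable_act s p m : f_stable s -> kspan s m -> kspan s (act p m).
Proof.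
move=> sf sm; apply: (kspan_sum (F := fun j => p`_j *: iter j f m)) => j _.
exact/kspanZ/f_stable_iter.
Qed.

Definition lmulXn j c :=
  \poly_(n < size c + j) (if (j <= n)%N then iter j th c`_(n - j) else 0).

Lemma coef_lmulXn j c n :
  (lmulXn j c)`_n = if (j <= n)%N then iter j th c`_(n - j) else 0.
Proof.
rewrite coef_poly; case: ltnP => // le_cj_n; case: ifP => // le_j_n.
by rewrite nth_default ?iterth0 // leq_subRL // addnC.
Qed.

Lemma act_lmulXn j c m : act (lmulXn j c) m = iter j f (act c m).
Proof.
rewrite (act_widen (n := j + size c)); last by rewrite addnC size_poly.
rewrite big_split_ord /= big1 ?add0r => [|i _]; last first.
  by rewrite coef_lmulXn leqNgt ltn_ord scale0r.
rewrite /act (big_morph (iter j f) (iterfD j) (iterf0 j)); apply: eq_bigr => i _.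
by rewrite coef_lmulXn leq_addr addKn iterfZ iterD.
Qed.

Definition skew_mul A c := \sum_(j < size A) A`_j *: lmulXn j c.

Lemma act_skew_mul A c m : act (skew_mul A c) m = act A (act c m).
Proof. by rewrite act_sum; apply: eq_bigr => j _; rewrite actZ act_lmulXn. Qed.

Lemma skew_mul_widen n A c : (size A <= n)%N ->
  skew_mul A c = \sum_(j < n) A`_j *: lmulXn j c.
Proof.
move=> le_A_n; rewrite /skew_mul (big_ord_widen n (fun j => A`_j *: lmulXn j c) le_A_n).
rewrite big_mkcond; apply: eq_bigr => j _.
by case: ltnP => // le_A_j; rewrite nth_default // scale0r.
Qed.

Lemma size_skew_mul A c a b : (size A <= a.+1)%N -> (size c <= b.+1)%N ->
  (size (skew_mul A c) <= (a + b).+1)%N.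
Proof.
move=> le_A le_c; apply/leq_sizeP => n lt_ab_n; rewrite (skew_mul_widen c le_A).
rewrite coef_sum big1 // => j _; rewrite coefZ coef_lmulXn.
case: ifP => _; last by rewrite mulr0.
have le_c_nj : (size c <= n - j)%N by have := ltn_ord j; lia.
by rewrite (nth_default 0 le_c_nj) iterth0 mulr0.
Qed.

Lemma coef_skew_mul_top A c a b : (size A <= a.+1)%N -> (size c <= b.+1)%N ->
  (skew_mul A c)`_(a + b) = A`_a * iter a th c`_b.
Proof.
move=> le_A le_c; rewrite (skew_mul_widen c le_A) coef_sum big_ord_recr /=.
rewrite coefZ coef_lmulXn leq_addr addKn big1 ?add0r // => j _.
rewrite coefZ coef_lmulXn; case: ifP => _; last by rewrite mulr0.
have le_c_nj : (size c <= a + b - j)%N by have := ltn_ord j; lia.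
by rewrite (nth_default 0 le_c_nj) iterth0 mulr0.
Qed.

Lemma skew_mul_neq0 A c : A != 0 -> c != 0 -> skew_mul A c != 0.
Proof.
move=> nzA nzc; apply/eqP => /(congr1 (fun p => p`_((size A).-1 + (size c).-1))).
rewrite coef_skew_mul_top ?leqSpred // -!lead_coefE coef0 => /eqP.
by rewrite mulf_eq0 iterth_eq0 !lead_coef_eq0 (negbTE nzA) (negbTE nzc).
Qed.

Lemma skew_ldiv p d : d != 0 -> exists q r : {poly K}, (size r < size d)%N /\
  forall m, act p m = act d (act q m) + act r m.
Proof.
move=> nzd; have [n] := ubnP (size p); elim: n p => // n IHn p; rewrite ltnS => le_p_n.
have [lt_pd | le_dp] := ltnP (size p) (size d).
  by exists 0, p; split => // m; rewrite act0 raddf0 add0r.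
set a := (size d).-1; set e := (size p - size d)%N.
have size_p : size p = (a + e).+1.
  by rewrite /a /e -addSn prednK ?size_poly_gt0 // subnKC.
(* The leading coefficient of d * (rho X^e) is lc d * th^a rho: this is where th
   has to be onto. *)
have [rho th_rho] := iterth_surj a (lead_coef p / lead_coef d).
have le_d : (size d <= a.+1)%N by exact: leqSpred.
have le_X : (size (rho *: 'X^e) <= e.+1)%N.
  by rewrite (leq_trans (size_scale_leq _ _)) ?size_polyXn.
pose p' := p - skew_mul d (rho *: 'X^e).
have lt_p' : (size p' < size p)%N.
  rewrite size_p ltnS; apply/leq_sizeP => j; rewrite leq_eqVlt => /orP [/eqP <-|lt_j].
    rewrite coefB coef_skew_mul_top // coefZ coefXn eqxx mulr1 th_rho.
    by rewrite [d`_a]lead_coefE mulrC divfK ?lead_coef_eq0 // lead_coefE size_p subrr.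
  rewrite coefB (leq_sizeP _ _ (size_skew_mul le_d le_X) j lt_j).
  by rewrite (leq_sizeP _ _ (eq_leq size_p) j lt_j) subrr.
have [q [r [lt_rd Ep']]] := IHn p' (leq_trans lt_p' le_p_n).
exists (q + rho *: 'X^e), r; split => // m.
have -> : p = p' + skew_mul d (rho *: 'X^e) by rewrite subrK.
by rewrite actD Ep' act_skew_mul actD raddfD addrAC.
Qed.

Definition iterates x n := mkseq (fun j => iter j f x) n.

Lemma kspan_iterates s x c : c != 0 -> kspan s (act c x) ->
  forall j, (j <= (size c).-1)%N -> kspan (s ++ iterates x (size c).-1) (iter j f x).
Proof.
move=> nzc sc; set top := (size c).-1; set s' := s ++ _.
have low_iter j : (j < top)%N -> kspan s' (iter j f x).
  move=> lt_j; have -> : iter j f x = s'`_(size s + j).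
    by rewrite nth_cat ltnNge leq_addr /= addKn nth_mkseq.
  by apply: kspan_nth; rewrite size_cat size_mkseq ltn_add2l.
move=> j; rewrite leq_eqVlt => /orP [/eqP -> | /low_iter //].
have lc_c : c`_top != 0 by rewrite -lead_coefE lead_coef_eq0.
have act_c : act c x = \sum_(j < top) c`_j *: iter j f x + c`_top *: iter top f x.
  by rewrite /act -[size c]prednK ?size_poly_gt0 // big_ord_recr.
have -> : iter top f x =
    (c`_top)^-1 *: (act c x - \sum_(j < top) c`_j *: iter j f x).
  by rewrite act_c addrC addKr scalerA mulVf // scale1r.
apply/kspanZ/kspanB; first exact: kspan_catl.
by apply: (kspan_sum (F := fun j => c`_j *: iter j f x)) => i /low_iter /kspanZ.
Qed.

Lemma f_stable_iterates s x c : f_stable s -> c != 0 -> kspan s (act c x) ->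
  f_stable (s ++ iterates x (size c).-1).
Proof.
move=> sf nzc sc; apply: f_stable_nth => i.
rewrite size_cat size_mkseq nth_cat => lt_i; case: ltnP => [lt_is | le_si].
  exact/kspan_catl/sf/kspan_nth.
rewrite nth_mkseq ?ltn_subLR //.
by apply: (kspan_iterates (j := (i - size s).+1) nzc sc); rewrite ltn_subLR.
Qed.

Inductive generated (g s : seq M) : M -> Prop :=
  | generated_kspan m : kspan s m -> generated g s m
  | generated_mem x : x \in g -> generated g s x
  | generatedD x y : generated g s x -> generated g s y -> generated g s (x + y)
  | generatedZ a x : generated g s x -> generated g s (a *: x)
  | generated_f x : generated g s x -> generated g s (f x).

Lemma generated_sum g s n (F : nat -> M) :
  (forall i, (i < n)%N -> generated g s (F i)) -> generated g s (\sum_(i < n) F i).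
Proof.
move=> gF; apply: (big_ind (generated g s)) => [||i _]; last exact: gF.
  exact/generated_kspan/kspan0.
exact: generatedD.
Qed.

Lemma generated_act g s p x : generated g s x -> generated g s (act p x).
Proof.
move=> gx; apply: (generated_sum (F := fun j => p`_j *: iter j f x)) => j _.
by apply: generatedZ; elim: j => //= j; apply: generated_f.
Qed.

Lemma generatedB g s x y : generated g s x -> generated g s y -> generated g s (x - y).
Proof. by move=> gx gy; rewrite -scaleN1r; apply/generatedD/generatedZ. Qed.

Definition generates g s := forall m, generated g s m.

Definition relation_mod g s (c : nat -> {poly K}) :=
  kspan s (\sum_(i < size g) act (c i) g`_i).

Definition free_mod g s := forall c : nat -> {poly K},
  relation_mod g s c -> forall i, (i < size g)%N -> c i = 0.

Lemma generated_combination g s m : f_stable s -> generated g s m ->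
  exists c : nat -> {poly K}, kspan s (m - \sum_(i < size g) act (c i) g`_i).
Proof.
move=> sf.
elim=> {m} [m sm | x gx | x y _ [c1 s1] _ [c2 s2] | a x _ [c sc] | x _ [c sc]].
- by exists (fun _ => 0); rewrite big1 ?subr0 // => i _; rewrite act0.
- exists (fun i => (i == index x g)%:R); rewrite -index_mem in gx.
  rewrite (bigD1 (Ordinal gx)) //= eqxx act1 nth_index -?index_mem //.
  rewrite big1 ?addr0 ?subrr; first exact: kspan0.
  by move=> i; rewrite -val_eqE /= => /negbTE ->; rewrite act0.
- exists (fun i => c1 i + c2 i); under eq_bigr => i _ do rewrite actD.
  by rewrite big_split opprD addrACA; apply: kspanD.
- exists (fun i => a *: c i); under eq_bigr => i _ do rewrite actZ.
  by rewrite -scaler_sumr -scalerBr; apply: kspanZ.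
- exists (fun i => lmulXn 1 (c i)); under eq_bigr => i _ do rewrite act_lmulXn /=.
  by rewrite -raddf_sum -raddfB; apply: sf.
Qed.

Lemma kspan_act_cancel g s A x : f_stable s -> generates g s -> free_mod g s ->
  A != 0 -> kspan s (act A x) -> kspan s x.
Proof.
move=> sf gen free nzA sAx; have [c sc] := generated_combination sf (gen x).
set y := \sum_(i < size g) act (c i) g`_i in sc.
have rel : relation_mod g s (fun i => skew_mul A (c i)).
  rewrite /relation_mod; under eq_bigr => i _ do rewrite act_skew_mul.
  rewrite -raddf_sum -/y -[y](subKr x) raddfB.
  exact/kspanB/f_stable_act.
suff y0 : y = 0 by rewrite y0 subr0 in sc.
rewrite /y big1 // => i _; have := free _ rel i (ltn_ord i).
have [-> _|nz_ci] := eqVneq (c i) 0; first exact: act0.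
by move/eqP; rewrite (negbTE (skew_mul_neq0 nzA nz_ci)).
Qed.

Lemma generates_drop g s k c : f_stable s -> generates g s -> (k < size g)%N ->
  c != 0 -> kspan s (act c g`_k) ->
  exists g' s', [/\ (size g' < size g)%N, f_stable s' & generates g' s'].
Proof.
move=> sf gen lt_k nzc sc; set x := g`_k in sc.
have gx : x \in g by exact: mem_nth.
exists (rem x g), (s ++ iterates x (size c).-1); split.
- by rewrite size_rem // ltn_predL (leq_ltn_trans _ lt_k).
- exact: f_stable_iterates.
move=> m; elim: (gen m) => {m} [m sm | y gy | y z _ gy _ gz | a y _ gy | y _ gy].
- exact/generated_kspan/kspan_catl.
- have [->|neq_yx] := eqVneq y x; last exact/generated_mem/rem_mem.
  exact/generated_kspan/(kspan_iterates (j := 0) nzc sc).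
- exact: generatedD.
- exact: generatedZ.
- exact: generated_f.
Qed.

Lemma generates_transvection g s i k q : i != k -> (i < size g)%N -> (k < size g)%N ->
  generates g s -> generates (set_nth 0 g k (g`_k + act q g`_i)) s.
Proof.
move=> neq_ik lt_i lt_k gen m; set g1 := set_nth _ _ _ _.
have size_g1 : size g1 = size g by rewrite size_set_nth (maxn_idPr lt_k).
have g1E j : g1`_j = if j == k then g`_k + act q g`_i else g`_j by exact: nth_set_nth.
have g1_mem j : (j < size g)%N -> generated g1 s g1`_j.
  by move=> lt_j; apply/generated_mem/mem_nth; rewrite size_g1.
elim: (gen m) => {m} [m sm | y gy | y z _ gy _ gz | a y _ gy | y _ gy].
- exact: generated_kspan.
- rewrite -(nth_index 0 gy); rewrite -index_mem in gy.
  have [-> | neq_yk] := eqVneq (index y g) k; last first.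
    by have := g1_mem _ gy; rewrite g1E (negbTE neq_yk).
  have -> : g`_k = g1`_k - act q g1`_i by rewrite !g1E eqxx (negbTE neq_ik) addrK.
  by apply: generatedB; [|apply: generated_act]; apply: g1_mem.
- exact: generatedD.
- exact: generatedZ.
- exact: generated_f.
Qed.

Lemma relation_mod_transvection g s (c : nat -> {poly K}) i k q r :
  i != k -> (i < size g)%N -> (k < size g)%N ->
  (forall m, act (c i) m = act (c k) (act q m) + act r m) -> relation_mod g s c ->
  relation_mod (set_nth 0 g k (g`_k + act q g`_i)) s
    (fun j => if j == i then r else c j).
Proof.
move=> neq_ik lt_i lt_k ci_div; rewrite /relation_mod size_set_nth (maxn_idPr lt_k).
set g1 := set_nth _ _ _ _.
congr (kspan s _).
rewrite (big_ord_split2 (fun j => act (if j == i then r else c j) g1`_j)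
  lt_i lt_k neq_ik).
rewrite (big_ord_split2 (fun j => act (c j) g`_j) lt_i lt_k neq_ik) /g1 /=.
rewrite !nth_set_nth /= eqxx (negbTE neq_ik) eq_sym (negbTE neq_ik) eqxx.
congr (_ + _); last first.
  apply: eq_bigr => j /andP [/negbTE ji /negbTE jk].
  by rewrite nth_set_nth /= ji jk.
by rewrite ci_div raddfD (addrC (act (c k) _)) -addrA (addrC (act (c k) _)).
Qed.

Definition rel_size g (c : nat -> {poly K}) := (\sum_(j < size g) size (c j))%N.

Lemma relation_mod_reduce g s (c : nat -> {poly K}) i k :
  generates g s -> relation_mod g s c ->
  i != k -> (i < size g)%N -> (k < size g)%N -> c k != 0 ->
  (size (c k) <= size (c i))%N ->
  exists g1 (c1 : nat -> {poly K}),
    [/\ size g1 = size g, generates g1 s, relation_mod g1 s c1,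
    c1 k != 0 & (rel_size g1 c1 < rel_size g c)%N].
Proof.
move=> gen rel neq_ik lt_i lt_k nz_ck le_ki.
have [q [r [lt_r_ck ci_div]]] := skew_ldiv (c i) nz_ck.
have size_g1 : size (set_nth 0 g k (g`_k + act q g`_i)) = size g.
  by rewrite size_set_nth (maxn_idPr lt_k).
exists (set_nth 0 g k (g`_k + act q g`_i)), (fun j => if j == i then r else c j).
split=> //.
- exact: generates_transvection.
- exact: relation_mod_transvection.
- by rewrite eq_sym in neq_ik; rewrite (negbTE neq_ik).
rewrite /rel_size size_g1 (bigD1 (Ordinal lt_i)) //.
rewrite [X in (_ < X)%N](bigD1 (Ordinal lt_i)) //= eqxx.
rewrite (eq_bigr (fun j : 'I_(size g) => size (c j))) => [|j].
  by rewrite ltn_add2r (leq_trans lt_r_ck).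
by rewrite -val_eqE /= => /negbTE ->.
Qed.

Lemma generates_shrink g s (c : nat -> {poly K}) k : f_stable s -> generates g s ->
  relation_mod g s c -> (k < size g)%N -> c k != 0 ->
  exists g' s', [/\ (size g' < size g)%N, f_stable s' & generates g' s'].
Proof.
move=> sf gen rel lt_k nz_ck; have [n] := ubnP (rel_size g c).
elim: n g c k gen rel lt_k nz_ck => // n IHn g c k gen rel lt_k nz_ck.
rewrite ltnS => le_n.
have [[i [lt_i neq_ik] nz_ci] | no_i] :=
  classic (exists2 i, (i < size g)%N /\ i != k & c i != 0); last first.
  apply: (generates_drop sf gen lt_k nz_ck); move: rel; rewrite /relation_mod.
  rewrite (bigD1 (Ordinal lt_k)) //= big1 ?addr0 // => j; rewrite -val_eqE /= => neq_jk.
  have -> : c j = 0.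
    by apply/eqP/contraT => nz_cj; exfalso; apply: no_i; exists j.
  exact: act0.
have reduce i' k' : i' != k' -> (i' < size g)%N -> (k' < size g)%N -> c k' != 0 ->
    (size (c k') <= size (c i'))%N ->
    exists g' s', [/\ (size g' < size g)%N, f_stable s' & generates g' s'].
  move=> neq lt_i' lt_k' nz le_ki; have [g1 [c1 [size_g1 gen1 rel1 nz1 lt1]]] :=
    relation_mod_reduce gen rel neq lt_i' lt_k' nz le_ki.
  rewrite -size_g1; apply: (IHn g1 c1 k' gen1 rel1 _ nz1 (leq_trans lt1 le_n)).
  by rewrite size_g1.
have [le_ki | /ltnW le_ik] := leqP (size (c k)) (size (c i)).
  exact: (reduce i k).
by apply: (reduce k i); rewrite // eq_sym.
Qed.

Lemma exists_free_generators g s : f_stable s -> generates g s ->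
  exists e s', [/\ f_stable s', generates e s' & free_mod e s'].
Proof.
have [n] := ubnP (size g); elim: n g s => // n IHn g s; rewrite ltnS => le_n sf gen.
have [[c [i [rel lt_i nz_ci]]] | no_rel] :=
  classic (exists (c : nat -> {poly K}) i,
    [/\ relation_mod g s c, (i < size g)%N & c i != 0]).
  have [g' [s' [lt_g' sf' gen']]] := generates_shrink sf gen rel lt_i nz_ci.
  exact: (IHn g' s' (leq_trans lt_g' le_n) sf' gen').
exists g, s; split=> // c rel i lt_i.
by apply/eqP/contraT => nz_ci; exfalso; apply: no_rel; exists c, i.
Qed.

Lemma fd_stable_annihilated (N : M -> Prop) x : fd_stable f N -> N x ->
  exists2 A, A != 0 & act A x = 0.
Proof.
move=> [_ _ _ Nf [t Nt]] Nx.
have t_iter j : kspan t (iter j f x) by apply/Nt; elim: j => //= j /Nf.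
have [A [nzA le_A EA]] := kspan_dependent t_iter.
by exists A; rewrite // (act_widen _ le_A).
Qed.

Lemma tors_part_kspan e s : f_stable s -> generates e s -> free_mod e s ->
  forall m, tors_part f m <-> kspan s m.
Proof.
move=> sf gen free m; split=> [[n [Ns [xs [Nxs ->]]]] | sm].
  apply: kspan_sum => i /Nxs [fdN Nx]; have [A nzA Ax0] := fd_stable_annihilated fdN Nx.
  by apply: (kspan_act_cancel sf gen free nzA); rewrite Ax0; apply: kspan0.
exact: (fd_stable_tors_part (kspan_fd_stable sf)).
Qed.

Lemma fin_gen_structure : fin_gen f ->
  (exists s, forall m, tors_part f m <-> kspan s m) /\
  free_fin_rank_quot f (tors_part f).
Proof.
move=> [g0 g0P].
have sf0 : f_stable [::] by move=> m /kspan_nil ->; rewrite raddf0; apply: kspan0.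
have gen0 : generates g0 [::].
  move=> m; have [d [c ->]] := g0P m.
  apply: (generated_sum (F := fun i => skew_act f (c i) d g0`_i)) => i lt_i.
  by rewrite -act_poly; apply/generated_act/generated_mem/mem_nth.
have [e [s [sf gen free]]] := exists_free_generators sf0 gen0.
have torsE := tors_part_kspan sf gen free.
split; first by exists s.
exists e; split=> [m | d c /torsE rel i j lt_i lt_j].
  have [c sc] := generated_combination sf (gen m).
  exists (\sum_(i < size e) size (c i))%N, (fun i j => (c i)`_j); apply/torsE.
  congr (kspan s (m - _)): sc; apply: eq_bigr => i _.
  by rewrite /skew_act -act_widen // (bigD1 i) //= leq_addr.
have := free (fun i => \poly_(j < d) c i j) _ i lt_i.
move/(_ _)/(congr1 (fun p => p`_j)); rewrite coef_poly lt_j coef0; apply.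
by rewrite /relation_mod; under eq_bigr => k _ do rewrite act_poly.
Qed.

End SkewPolynomialAction.

Section CommutingSemilinearMap.
Variables (K : fieldType) (M : lmodType K) (th : K -> K) (f : M -> M).
Variable h : {additive M -> M}.
Hypothesis h_semi : forall a m, h (a *: m) = th a *: h m.
Hypothesis th_surj : forall b, exists a, th a = b.
Hypothesis h_comm : forall m, h (f m) = f (h m).

Lemma fd_stable_image (N : M -> Prop) :
  fd_stable f N -> fd_stable f (fun y => exists2 x, N x & y = h x).
Proof.
move=> [N0 ND NZ Nf [t Nt]]; split.
- by exists 0; rewrite ?raddf0.
- by move=> _ _ [x Nx ->] [y Ny ->]; exists (x + y); rewrite ?raddfD //; apply: ND.
- move=> b _ [x Nx ->]; have [a <-] := th_surj b.
  by exists (a *: x); rewrite ?h_semi //; apply: NZ.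
- by move=> _ [x Nx ->]; exists (f x); rewrite ?h_comm //; apply: Nf.
exists (map h t) => y; split.
  move=> [x /Nt [c ->] ->]; exists (fun i => th (c i)); rewrite raddf_sum size_map.
  by apply: eq_bigr => i _; rewrite h_semi (nth_map 0).
move=> [c ->]; have [a th_a] := functional_choice _ (fun i => th_surj (c i)).
exists (\sum_(i < size t) a i *: t`_i); first by apply/Nt; exists a.
rewrite raddf_sum size_map; apply: eq_bigr => i _.
by rewrite h_semi th_a (nth_map 0).
Qed.

Lemma tors_part_image m : tors_part f m -> tors_part f (h m).
Proof.
move=> [n [Ns [xs [Nxs ->]]]]; rewrite raddf_sum.
exists n, (fun i y => exists2 x, Ns i x & y = h x), (fun i => h (xs i)).
by split=> // i /Nxs [fdN Nx]; split; [exact: fd_stable_image | exists (xs i)].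
Qed.

Lemma tors_part_sub s : (forall m, tors_part f m <-> kspan s m) ->
  forall m, tors_part f m -> tors_part h m.
Proof.
move=> torsE m /torsE sm; apply: (fd_stable_tors_part _ sm).
by apply: kspan_fd_stable => x /torsE /tors_part_image /torsE.
Qed.

End CommutingSemilinearMap.

Lemma free_fin_rank_quot_ext (K : fieldType) (M : lmodType K) (f : M -> M)
    (P Q : M -> Prop) :
  (forall m, P m <-> Q m) -> free_fin_rank_quot f P -> free_fin_rank_quot f Q.
Proof.
move=> PQ [e [span free]]; exists e; split=> [m | d c /PQ]; last exact: free.
by have [d [c /PQ]] := span m; exists d, c.
Qed.

Lemma card_finField_pchar_nat (F : finFieldType) (K : nzSemiRingType)
    (phi : {rmorphism F -> K}) :
  [pchar K].-nat #|F|.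
Proof.
have [p p_pr pchF] := finPcharP F.
have -> : #|F| = (p ^ logn p #|F|)%N by exact: (card_pprimeChar pchF).
by apply: (pi_pnat _ (rmorph_pchar phi pchF)); rewrite pnatX pnat_id.
Qed.

Section InverseFrobenius.
Variables (K : closedFieldType) (q : nat).
Hypothesis q_pchar : [pchar K].-nat q.

Definition frobq (x : K) := x ^+ q.

Fact frobq_is_zmod_morphism : zmod_morphism frobq.
Proof. by move=> x y; rewrite /frobq exprDn_pchar // exprNn_pchar. Qed.

Fact frobq_is_monoid_morphism : monoid_morphism frobq.
Proof. by split=> [|x y]; rewrite /frobq ?expr1n // exprMn. Qed.

HB.instance Definition _ :=
  GRing.isZmodMorphism.Build K K frobq frobq_is_zmod_morphism.
HB.instance Definition _ :=
  GRing.isMonoidMorphism.Build K K frobq frobq_is_monoid_morphism.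

Lemma frobq_surj b : exists a, frobq a == b.
Proof.
have q_gt0 : (0 < q)%N by case/andP: q_pchar.
have /closed_rootP [a] : size ('X^q - b%:P) != 1 by rewrite size_XnsubC // eqSS -lt0n.
by rewrite rootE !hornerE subr_eq0 => ab; exists a.
Qed.

Definition frobq_inv b := xchoose (frobq_surj b).

Lemma frobq_invK : cancel frobq_inv frobq.
Proof. by move=> b; apply/eqP/(xchooseP (frobq_surj b)). Qed.

Lemma frobqK : cancel frobq frobq_inv.
Proof.
by move=> a; apply: (fmorph_inj (frobq : {rmorphism K -> K})); apply: frobq_invK.
Qed.

HB.instance Definition _ := GRing.isZmodMorphism.Build K K frobq_inv
  (can2_zmod_morphism frobqK frobq_invK).
HB.instance Definition _ := GRing.isMonoidMorphism.Build K K frobq_inv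
  (can2_monoid_morphism frobqK frobq_invK).

End InverseFrobenius.

Theorem proposition4
  (F : finFieldType) (K : closedFieldType)
  (iota : {rmorphism {fraction {poly F}} -> K})
  (Kalg : forall x : K, exists2 p : {poly {fraction {poly F}}},
            p != 0 & root (map_poly iota p) x)
  (M : lmodType K) (sM tM : M -> M)
  (s_add : forall x y : M, sM (x + y) = sM x + sM y)
  (s_semi : forall (a : K) (m : M), sM ((a ^+ #|F|) *: m) = a *: sM m)
  (t_add : forall x y : M, tM (x + y) = tM x + tM y)
  (t_lin : forall (a : K) (m : M), tM (a *: m) = a *: tM m)
  (st_comm : forall m : M, sM (tM m) = tM (sM m))
  (fg_s : fin_gen sM) (fg_t : fin_gen tM) :
  (forall m : M, tors_part sM m <-> tors_part tM m) /\
  (exists s : seq M, forall m : M, tors_part sM m <-> kspan s m) /\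
  free_fin_rank_quot sM (tors_part sM) /\
  free_fin_rank_quot tM (tors_part sM).
Proof.
have q_pchar := card_finField_pchar_nat (iota \o @tofrac _ \o polyC).
pose th : {rmorphism K -> K} := frobq_inv q_pchar.
have th_surj b : exists a, th a = b by exists (frobq #|F| b); apply: frobqK.
have s_semilin a m : sM (a *: m) = th a *: sM m.
  by rewrite -[in LHS](frobq_invK q_pchar a) s_semi.
pose sA : {additive M -> M} :=
  HB.pack sM (GRing.isNmodMorphism.Build M M sM (add_morph_nmod_morphism s_add)).
pose tA : {additive M -> M} :=
  HB.pack tM (GRing.isNmodMorphism.Build M M tM (add_morph_nmod_morphism t_add)).
have id_surj b : exists a, @idfun K a = b by exists b.
have [[s torsE_s] free_s] := fin_gen_structure (f := sA) s_semilin th_surj fg_s.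
have [[t torsE_t] free_t] :=
  fin_gen_structure (f := tA) (th := idfun) t_lin id_surj fg_t.
have torsE m : tors_part sM m <-> tors_part tM m.
  split; first exact: (tors_part_sub (h := tA) t_lin id_surj
    (fun x => esym (st_comm x)) torsE_s).
  exact: (tors_part_sub (h := sA) s_semilin th_surj st_comm torsE_t).
split=> //; split; first by exists s.
by split=> //; apply: free_fin_rank_quot_ext free_t => m; apply: iff_sym.
Qed.
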